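(* Let $T=(V,E)$ be a binary $X$-tree and $x_1\neq x_2$ elements of $X$. If $P_{x_1}(T)\cap P_{x_2}(T)\neq\emptyset$, then every interior vertex of $T$ lies on the path from $x_1$ to $x_2$ in $T$ (so $T$ is a caterpillar tree with $x_1,x_2$ at opposite ends).
   Context: Let $X$ be a finite set with $|X|=n\ge 3$. A binary $X$-tree is a finite tree $T=(V,E)$ whose degree-1 vertices are exactly the elements of $X$ and all of whose other (interior) vertices have degree $3$. A cord is a $2$-subset $\{y,z\}$ of $X$, written $yz$. For $x\in X$, $P_x(T)$ is the collection of all sets of the form $\{ax: a\in X-\{x\}\}\cup\{y_vz_v: v\in V-X\}$, where for each interior vertex $v$, $y_v$ and $z_v$ are leaves chosen from the two distinct connected components of $T-v$ that do not contain $x$ (one from each). A caterpillar tree is a binary $X$-tree all of whose interior vertices lie on a single path. *)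

From mathcomp Require Import all_boot.
Set Implicit Arguments. Unset Strict Implicit. Unset Printing Implicit Defensive.

Definition simple_graph (V : finType) (e : rel V) : Prop :=
  symmetric e /\ irreflexive e.

Definition deg (V : finType) (e : rel V) (v : V) : nat := #|[set w | e v w]|.

Definition connected (V : finType) (e : rel V) : Prop :=
  forall u w : V, connect e u w.

Definition acyclic (V : finType) (e : rel V) : Prop :=
  forall p : seq V, uniq p -> 3 <= size p -> ~~ cycle e p.

Definition is_tree (V : finType) (e : rel V) : Prop :=
  [/\ simple_graph e, connected e & acyclic e].

Definition binary_X_tree (V : finType) (e : rel V) (X : {set V}) : Prop :=
  [/\ is_tree e,
      (forall v, (v \in X) = (deg e v == 1)) &
      (forall v, v \notin X -> deg e v = 3)].

Definition del_vertex (V : finType) (e : rel V) (v : V) : rel V :=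
  [rel a b | [&& a != v, b != v & e a b]].

(* valid cord choice (y_v, z_v) at interior vertex v w.r.t. x:
   leaves from two distinct components of T - v not containing x *)
Definition cord_choice (V : finType) (e : rel V) (X : {set V}) (x v y z : V)
  : Prop :=
  [/\ y \in X, z \in X,
      ~~ connect (del_vertex e v) y z,
      ~~ connect (del_vertex e v) y x &
      ~~ connect (del_vertex e v) z x].

(* C \in P_x(T); cords yz are represented as 2-element sets [set y; z] *)
Definition in_Px (V : finType) (e : rel V) (X : {set V}) (x : V)
  (C : {set {set V}}) : Prop :=
  exists y z : V -> V,
    (forall v, v \notin X -> cord_choice e X x v (y v) (z v)) /\
    C = [set [set a; x] | a in X :\ x] :|: [set [set y v; z v] | v in ~: X].

Definition on_path (V : finType) (e : rel V) (u u' w : V) : Prop :=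
  exists p : seq V, [/\ path e u p, last u p = u', uniq (u :: p) &
                        w \in u :: p].

From mathcomp Require Import all_boot zify.
Set Implicit Arguments. Unset Strict Implicit. Unset Printing Implicit Defensive.

(* Let T be a binary X-tree and C a common member of P_x1(T) and P_x2(T).

   Call an interior vertex w a separator if deleting w disconnects x1 from x2;
   in a tree these are exactly the interior vertices on the x1-x2 path.
   - Every cord a x1 (a a leaf other than x1, x2) of C, read as a member of
     P_x2(T), cannot be a cord b x2, so it is the cord chosen at an interior
     vertex w; as both ends avoid the component of x2 in T - w, w is a
     separator.  Distinct a give distinct cords, hence #|X| - 2 <= #separators.
   - Degree counting in the forest (at most |S| - 1 edges on S vertices)
     shows that a binary X-tree has at most #|X| - 2 interior vertices.
   So every interior vertex is a separator, and a separator lies on the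
   (duplicate-free) path from x1 to x2. *)

Section Forest.
Variables (V : finType) (e : rel V).
Hypotheses (e_sym : symmetric e) (e_irr : irreflexive e).

Definition deg_in (S : {set V}) (v : V) : nat := #|[set w in S | e v w]|.

(* A duplicate-free path from u that contains every S-neighbour of u closes
   into a cycle as soon as u has two S-neighbours: follow the path up to the
   neighbour of u other than the first vertex, and go back to u. *)
Lemma closing_cycle (S : {set V}) u rest :
  1 < deg_in S u -> uniq (u :: rest) -> path e u rest ->
  (forall w, w \in S -> e u w -> w \in u :: rest) ->
  exists p, [/\ uniq p, 3 <= size p & cycle e p].
Proof.
move=> /card_gt1P[a [b [aS bS ab]]] u_rest e_rest nbrs_in.
move: aS bS; rewrite !inE => /andP[aS ea] /andP[bS eb].
have nbr_in_rest w : w \in S -> e u w -> w \in rest.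
  move=> wS ew; move: (nbrs_in w wS ew); rewrite inE => /orP[/eqP wu|//].
  by rewrite wu e_irr in ew.
have [w [w_rest euw w_head]] : exists w, [/\ w \in rest, e u w & w != head u rest].
  case: (eqVneq a (head u rest)) => [a_head|]; last by exists a; rewrite nbr_in_rest.
  by exists b; rewrite nbr_in_rest // -a_head eq_sym.
case/splitPr: w_rest u_rest e_rest w_head => r1 r2 u_rest e_rest w_head.
exists (u :: rcons r1 w); split.
- by move: u_rest; rewrite -cat_rcons -cat_cons cat_uniq => /andP[].
- by case: r1 w_head {u_rest e_rest} => [|? r1] /=; rewrite ?eqxx ?size_rcons.
- rewrite /= rcons_path last_rcons (e_sym w u) euw andbT.
  move: e_rest; rewrite cat_path => /andP[e_r1 /= /andP[e_w _]].
  by rewrite rcons_path e_r1 e_w.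
Qed.

(* If every vertex of S has at least two S-neighbours, any duplicate-free
   path inside S can be extended greedily until it closes into a cycle;
   n bounds the number of vertices not yet on the path. *)
Lemma extend_to_cycle (S : {set V}) :
  (forall v, v \in S -> 1 < deg_in S v) ->
  forall n u rest, #|V| - size (u :: rest) <= n -> uniq (u :: rest) ->
  all (mem S) (u :: rest) -> path e u rest ->
  exists p, [/\ uniq p, 3 <= size p & cycle e p].
Proof.
move=> deg2; elim=> [|n IH] u rest room u_rest in_S e_rest;
  have uS : u \in S by case/andP: in_S.
all: case: (pickP [pred w | [&& w \in S, e u w & w \notin u :: rest]]) =>
  [w /and3P[wS euw w_new] | no_new]; last first.
1,3: apply: (closing_cycle (deg2 u uS) u_rest e_rest) => w wS euw;
  by move: (no_new w) => /=; rewrite wS euw /=; case: (w \in _).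
- have /card_uniqP card_w : uniq (w :: u :: rest) by rewrite cons_uniq w_new.
  by have := max_card (mem (w :: u :: rest)); rewrite card_w /= in room *; lia.
- apply: (IH w (u :: rest)); first by move: room => /=; lia.
  + by rewrite cons_uniq w_new.
  + by rewrite /= wS.
  + by rewrite /= e_sym euw.
Qed.

Lemma acyclic_has_leaf (S : {set V}) :
  acyclic e -> S != set0 -> exists2 l, l \in S & deg_in S l <= 1.
Proof.
move=> acyc /set0Pn[v vS].
case: (pickP [pred l | (l \in S) && (deg_in S l <= 1)]) => [l /andP[]|none];
  first by exists l.
have deg2 u : u \in S -> 1 < deg_in S u.
  by move=> uS; move: (none u) => /=; rewrite uS /=; lia.
have v_in_S : all (mem S) [:: v] by rewrite /= vS.
have [p [up sp cp]] :=
  @extend_to_cycle S deg2 #|V| v [::] (leq_subr _ _) isT v_in_S isT.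
by move: (acyc p up sp); rewrite cp.
Qed.

(* Deleting a vertex l from S lowers the degree sum by twice the degree of l:
   l loses deg_in S l, and each of its neighbours loses one. *)
Lemma deg_sum_setD1 (S : {set V}) l : l \in S ->
  \sum_(v in S) deg_in S v =
  \sum_(v in S :\ l) deg_in (S :\ l) v + 2 * deg_in S l.
Proof.
move=> lS; rewrite (bigD1 l lS) /=.
have -> : \sum_(v in S | v != l) deg_in S v =
          \sum_(v in S :\ l) (deg_in (S :\ l) v + (e v l : nat)).
  apply: eq_big => [v|v /andP[vS _]]; first by rewrite in_setD1 andbC.
  rewrite /deg_in (cardsD1 l [set w in S | e v w]) !inE lS addnC.
  by congr (_ + _); apply: eq_card => w; rewrite !inE andbA.
rewrite big_split /=.
have -> : \sum_(v in S :\ l) (e v l : nat) = deg_in S l.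
  transitivity (\sum_(v in S :\ l | e v l) 1).
    by rewrite big_mkcondr; apply: eq_bigr => v _; case: (e v l).
  rewrite sum1dep_card; apply: eq_card => w; rewrite !inE e_sym.
  by case: (eqVneq w l) => [->|]; rewrite ?e_irr ?andbF.
lia.
Qed.

(* A forest on a nonempty vertex set S has at most #|S| - 1 edges, i.e. its
   degree sum is at most 2 #|S| - 2; proved by removing leaves. *)
Lemma forest_deg_sum (S : {set V}) :
  acyclic e -> S != set0 -> \sum_(v in S) deg_in S v + 2 <= 2 * #|S|.
Proof.
move=> acyc; move: {2}#|S| (leqnn #|S|) => n; elim: n S => [|n IH] S size_S S0.
  by move: S0; rewrite -card_gt0; lia.
have [l lS deg_l] := acyclic_has_leaf acyc S0.
have card_S : #|S| = #|S :\ l| + 1 by rewrite (cardsD1 l S) lS addnC.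
rewrite (deg_sum_setD1 lS) card_S.
have [S'0|S'0] := eqVneq (S :\ l) set0.
  have -> : deg_in S l = 0.
    apply/eqP; rewrite cards_eq0; apply/eqP/setP => w; rewrite !inE.
    have : w \notin S :\ l by rewrite S'0 inE.
    by rewrite !inE; case: eqP => [->|_ /= /negbTE ->]; rewrite ?e_irr ?andbF.
  by rewrite S'0 big_set0 cards0.
by have := IH (S :\ l) ltac:(lia) S'0; lia.
Qed.
End Forest.

(* Counting degrees in a binary X-tree (leaves have degree 1, interior
   vertices degree 3) against the forest bound: there are at least two more
   leaves than interior vertices. *)
Lemma binary_tree_interior_count (V : finType) (e : rel V) (X : {set V}) :
  binary_X_tree e X -> X != set0 -> #|~: X| + 2 <= #|X|.
Proof.
move=> [[[e_sym e_irr] _ acyc] deg_leaf deg_int] /set0Pn[x xX].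
have deg_full v : deg_in e [set: V] v = deg e v.
  by apply: eq_card => w; rewrite !inE.
have deg_sum : \sum_(v in [set: V]) deg_in e [set: V] v = #|X| + 3 * #|~: X|.
  rewrite (big_setID X) setTI setTD /=.
  congr (_ + _).
    by rewrite -sum1_card; apply: eq_bigr => v vX; apply/eqP; rewrite deg_full -deg_leaf.
  rewrite mulnC -sum_nat_const; apply: eq_bigr => v.
  by rewrite deg_full inE => /deg_int.
have V0 : [set: V] != set0 by apply/set0Pn; exists x.
by have := forest_deg_sum e_sym e_irr acyc V0; rewrite deg_sum cardsT -(cardsC X); lia.
Qed.

Lemma path_del_vertex (V : finType) (e : rel V) v x p :
  path e x p -> v \notin x :: p -> path (del_vertex e v) x p.
Proof.
elim: p x => [|y p IH] x //= /andP[exy e_p].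
rewrite !inE !negb_or => /and3P[vx vy vp].
by rewrite IH ?inE ?negb_or ?vy // andbT /del_vertex /= eq_sym vx eq_sym vy.
Qed.

(* In a connected graph, a vertex w whose deletion disconnects u from u'
   lies on the path from u to u': it lies on every walk from u to u', in
   particular on a duplicate-free one. *)
Lemma cut_vertex_on_path (V : finType) (e : rel V) u u' w :
  connected e -> ~~ connect (del_vertex e w) u u' -> on_path e u u' w.
Proof.
move=> conn cut; have /connectP[p e_p last_p] := conn u u'.
case/shortenP: e_p last_p => q e_q uniq_q _ last_q.
exists q; split=> //; apply: contraNT cut => w_notin_q.
by apply/connectP; exists q => //; apply: path_del_vertex.
Qed.

Definition separators (V : finType) (e : rel V) (X : {set V}) (x1 x2 : V)
  : {set V} := [set w | (w \notin X) && ~~ connect (del_vertex e w) x1 x2].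

(* A cord a x1 with a, x1 distinct from x2 in a member of P_x2(T) is not one of
   the cords b x2, so it is the cord chosen at an interior vertex w; both ends
   of that cord lie outside the component of x2 in T - w, hence w separates
   x1 from x2. *)
Lemma cord_at_separator (V : finType) (e : rel V) (X : {set V})
    (x1 x2 a : V) (y z : V -> V) :
  (forall v, v \notin X -> cord_choice e X x2 v (y v) (z v)) ->
  x1 != x2 -> a != x2 ->
  [set a; x1] \in [set [set b; x2] | b in X :\ x2] :|: [set [set y v; z v] | v in ~: X] ->
  [set a; x1] \in [set [set y v; z v] | v in separators e X x1 x2].
Proof.
move=> cords x12 ax2; rewrite inE => /orP[/imsetP[b _ ab] | /imsetP[w wX aw]].
  have : x2 \in [set a; x1] by rewrite ab !inE eqxx orbT.
  by rewrite !inE eq_sym (negbTE ax2) eq_sym (negbTE x12).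
rewrite inE in wX; have [_ _ _ yx2 zx2] := cords w wX.
apply/imsetP; exists w => //; rewrite inE wX /=.
have : x1 \in [set y w; z w] by rewrite -aw !inE eqxx orbT.
by rewrite !inE => /orP[] /eqP ->.
Qed.

Lemma card_cords_at (V : finType) (A : {set V}) (x : V) :
  x \notin A -> #|[set [set a; x] | a in A]| = #|A|.
Proof.
move=> xA; apply: card_in_imset => a b aA bA ab.
have : a \in [set b; x] by rewrite -ab !inE eqxx.
rewrite !inE => /orP[/eqP //|/eqP ax]; by move: xA; rewrite -ax aA.
Qed.

(* If some C lies in both P_x1(T) and P_x2(T), each of the #|X| - 2 cords a x1
   (a distinct from x1, x2) of C is the cord of a distinct vertex separating
   x1 from x2, so there are at least #|X| - 2 such separators. *)
Lemma common_cords_separators (V : finType) (e : rel V) (X : {set V})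
    (x1 x2 : V) (C : {set {set V}}) :
  in_Px e X x1 C -> in_Px e X x2 C -> x1 \in X -> x2 \in X -> x1 != x2 ->
  #|X| <= #|separators e X x1 x2| + 2.
Proof.
move=> [y1 [z1 [_ ->]]] [y2 [z2 [cords2 C2]]] x1X x2X x12.
have leaf_cords : [set [set a; x1] | a in X :\ x1 :\ x2]
    \subset [set [set y2 w; z2 w] | w in separators e X x1 x2].
  apply/subsetP => _ /imsetP[a aX ->]; move: aX; rewrite !inE => /and3P[ax2 ax1 aX].
  apply: cord_at_separator cords2 x12 ax2 _; rewrite -C2 inE; apply/orP; left.
  by apply/imsetP; exists a; rewrite // !inE ax1.
have := leq_trans (subset_leq_card leaf_cords) (leq_imset_card _ _).
rewrite card_cords_at ?inE ?eqxx ?andbF //.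
rewrite (cardsD1 x1 X) (cardsD1 x2 (X :\ x1)) !inE x1X x2X eq_sym x12 /=; lia.
Qed.

Theorem mainTheorem5 (V : finType) (e : rel V) (X : {set V})
  (x1 x2 : V) :
  binary_X_tree e X -> 3 <= #|X| ->
  x1 \in X -> x2 \in X -> x1 != x2 ->
  (exists C : {set {set V}}, in_Px e X x1 C /\ in_Px e X x2 C) ->
  forall v : V, v \notin X -> on_path e x1 x2 v.
Proof.
move=> tree _ x1X x2X x12 [C [P1 P2]] v vX.
have [[_ conn _] _ _] := tree.
have many_separators := common_cords_separators P1 P2 x1X x2X x12.
have X0 : X != set0 by apply/set0Pn; exists x1.
have few_interior := binary_tree_interior_count tree X0.
have sep_interior : separators e X x1 x2 \subset ~: X.
  by apply/subsetP => w; rewrite !inE => /andP[].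
have /eqP all_separate : separators e X x1 x2 == ~: X.
  by rewrite eqEcard sep_interior /=; lia.
apply: cut_vertex_on_path => //.
by move: vX; rewrite -in_setC -all_separate inE => /andP[].
Qed.
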